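(* Let $h$ be the concatenation of two uniformly distributed $\ell$-bit streams, let $x$ be a uniformly distributed $\ell$-bit stream, and let $z$ be any $\ell$-bit stream. Then $$G(z\boxplus h\vdash x\boxplus h)_\ell=G(z,z\boxplus h\vdash x\boxplus h)_\ell=\left(\tfrac34\right)^\ell.$$
   Context: For $x\in\mathbb{Z}_2^\ell$ and $h=h^{(0)}::h^{(1)}$ with $h^{(0)},h^{(1)}\in\mathbb{Z}_2^\ell$, $(x\boxplus h)_i=h^{(x_i)}_i$. The random values $x,h^{(0)},h^{(1)}$ are independent of each other and of $z$. $G(\Xi\vdash\Theta)$ is the guessing chance: the maximal probability, over randomized guessing procedures, of outputting $\Theta$ on input $\Xi$, the probability over the random values, as a sequence in $\ell$ considered up to negligible difference. *)

From mathcomp Require Import all_boot all_order all_algebra.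
From mathcomp Require Import classical_sets reals.
Set Implicit Arguments. Unset Strict Implicit. Unset Printing Implicit Defensive.
Import Order.TTheory GRing.Theory Num.Theory.
Local Open Scope ring_scope.
Local Open Scope classical_set_scope.

Definition bits (l : nat) := {ffun 'I_l -> bool}.

(* h = h0 :: h1 is a 2l-bit stream; h^(0) is its first half, h^(1) its second. *)
Definition hpart (l : nat) (b : bool) (h : bits (l + l)) : bits l :=
  [ffun i => if b then h (rshift l i) else h (lshift l i)].

Definition boxplus (l : nat) (x : bits l) (h : bits (l + l)) : bits l :=
  [ffun i => hpart (x i) h i].

(* randomized guessing procedure: a stochastic kernel from inputs to outputs *)
Definition kernel (R : realType) (I O : finType) (K : I -> O -> R) : Prop :=
  (forall i o, 0 <= K i o) /\ (forall i, \sum_(o : O) K i o = 1).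

Definition guess_chance (R : realType) (Omega I O : finType)
  (P : Omega -> R) (X : Omega -> I) (Y : Omega -> O) : R :=
  sup [set r : R | exists K : I -> O -> R,
         kernel K /\ r = \sum_(w : Omega) P w * K (X w) (Y w)].

Definition negligible (R : realType) (f : nat -> R) : Prop :=
  forall c : nat, exists N : nat, forall n : nat, (N <= n)%N ->
    `|f n| < ((n%:R) ^+ c)^-1.

Definition eq_negl (R : realType) (f g : nat -> R) : Prop :=
  negligible (fun n => f n - g n).

(* sample space at length l : (z, x, h) *)
Definition sample (l : nat) : finType := (bits l * bits l * bits (l + l))%type.

(* z has an arbitrary distribution pz (independent), x and h are uniform *)
Definition sample_prob (R : realType) (l : nat) (pz : bits l -> R)
  (w : sample l) : R :=
  pz w.1.1 * (#|{: bits l}|%:R)^-1 * (#|{: bits (l + l)}|%:R)^-1.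

From mathcomp Require Import all_boot all_order all_algebra.
From mathcomp Require Import classical_sets reals ring.
Import Order.TTheory GRing.Theory Num.Theory.
Set Implicit Arguments. Unset Strict Implicit. Unset Printing Implicit Defensive.

(* A guesser sees z and y := z [+] h and must output t := x [+] h.  In every
   coordinate, h^(z_i)_i = y_i is known while x_i and h^(~ z_i)_i are uniform;
   then t_i = y_i with probability 3/4 and each other value with probability
   1/4.  Hence every observation (z, y, t) has at most 3^l preimages among
   the 2^l * 4^l choices of (x, h), with exactly 3^l when t = y, so no guesser
   beats (3/4)^l and guessing t = y attains it.  Since y alone already
   supports that guess, seeing z in addition does not help. *)

Section Fibers.

Variable l : nat.

Lemma card_bits : #|{: bits l}| = (2 ^ l)%N.
Proof. by rewrite card_ffun card_bool card_ord. Qed.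

Definition mkh (f : bool -> 'I_l -> bool) : bits (l + l) :=
  [ffun j => match split j with inl i => f false i | inr i => f true i end].

Lemma hpart_mkh f b i : hpart b (mkh f) i = f b i.
Proof.
rewrite ffunE; case: b; rewrite ffunE.
- by have /= -> := @unsplitK l l (inr i).
- by have /= -> := @unsplitK l l (inl i).
Qed.

Lemma eq_hpart (h h' : bits (l + l)) :
  (forall b i, hpart b h i = hpart b h' i) -> h = h'.
Proof.
move=> eq_hh'; apply/ffunP => j; case: (splitP j) => [i|i] /= j_i.
- have -> : j = lshift l i by apply/val_inj.
  by have := eq_hh' false i; rewrite !ffunE.
- have -> : j = rshift l i by apply/val_inj.
  by have := eq_hh' true i; rewrite !ffunE.
Qed.

Definition observation (w : sample l) : bits l * bits l * bits l :=
  (w.1.1, boxplus w.1.1 w.2, boxplus w.1.2 w.2).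

Definition fiber_card (k : bits l * bits l * bits l) : nat :=
  #|[pred w | observation w == k]|.

(* Within a fiber, w is determined by the coordinates where x agrees with z
   and, at those, by the unobserved half h^(~ z_i)_i. *)
Definition fiber_code (z : bits l) (w : sample l) : {ffun 'I_l -> option bool} :=
  [ffun i => if w.1.2 i == z i then Some (hpart (~~ z i) w.2 i) else None].

Definition fiber_decode (z y : bits l) (c : {ffun 'I_l -> option bool}) : sample l :=
  ((z, [ffun i => if c i is Some _ then z i else ~~ z i]),
   mkh (fun b i => if b == z i then y i else if c i is Some v then v else y i)).

Lemma fiber_card_le z y t : (fiber_card (z, y, t) <= 3 ^ l)%N.
Proof.
rewrite /fiber_card -(card_in_imset (f := fiber_code z)).
  apply: leq_trans (max_card _) _.
  by rewrite card_ffun card_option card_bool card_ord.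
move=> [[z1 x1] h1] [[z2 x2] h2]; rewrite !inE /observation /=.
move=> /eqP[-> y1 t1] /eqP[-> y2 t2] /ffunP eq_code.
have x1_x2 : x1 = x2.
  apply/ffunP => i; have := eq_code i; rewrite !ffunE.
  by case: (x1 i); case: (x2 i); case: (z i).
subst x2; congr (_, _); apply: eq_hpart => b i.
have := eq_code i; rewrite !ffunE.
have := congr1 (fun f : bits l => f i) y1; have := congr1 (fun f : bits l => f i) y2.
have := congr1 (fun f : bits l => f i) t1; have := congr1 (fun f : bits l => f i) t2.
rewrite !ffunE.
by case: b; case: (z i); case: (x1 i) => /=; congruence.
Qed.

Lemma fiber_card_diag z y : fiber_card (z, y, y) = (3 ^ l)%N.
Proof.
apply/eqP; rewrite eqn_leq fiber_card_le /=.
have codeK : cancel (fiber_decode z y) (fiber_code z).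
  move=> c; apply/ffunP => i; rewrite ffunE /= hpart_mkh ffunE.
  by case: (c i) => [v|]; case: (z i).
have -> : (3 ^ l = #|[set fiber_decode z y c | c in [set: {ffun 'I_l -> option bool}]]|)%N.
  rewrite card_imset; last exact: can_inj codeK.
  by rewrite cardsT card_ffun card_option card_bool card_ord.
apply: subset_leq_card; apply/fintype.subsetP => _ /imsetP[c _ ->].
rewrite inE /observation /=; apply/eqP; congr (_, _, _).
  by apply/ffunP => i; rewrite ffunE hpart_mkh eqxx.
apply/ffunP => i; rewrite ffunE hpart_mkh ffunE.
by case: (c i) => [v|]; rewrite ?eqxx //; case: (z i).
Qed.

End Fibers.

Local Open Scope ring_scope.

Section Success.

Variables (R : realType) (l : nat) (pz : bits l -> R).
Hypothesis pz_ge0 : forall z, 0 <= pz z.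
Hypothesis pz_sum1 : \sum_z pz z = 1.

Definition zprob (z : bits l) : R :=
  pz z * (#|{: bits l}|%:R)^-1 * (#|{: bits (l + l)}|%:R)^-1.

Lemma zprob_ge0 z : 0 <= zprob z.
Proof. by rewrite !mulr_ge0 ?invr_ge0 ?ler0n. Qed.

Lemma sum_zprob_3pow : \sum_z \sum_(y : bits l) zprob z *+ 3 ^ l = (3 / 4) ^+ l.
Proof.
under eq_bigr do rewrite sumr_const card_bits -mulrnA -mulr_natr /zprob -!mulrA.
rewrite -mulr_suml pz_sum1 mul1r !card_bits expnD !natrM !natrX.
have two_l_neq0 : (2 : R) ^+ l != 0 by rewrite expf_neq0 // pnatr_eq0.
have -> : (4 : R) = 2 * 2 by rewrite -natrM.
rewrite expr_div_n exprMn.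
by field; rewrite two_l_neq0.
Qed.

Lemma sum_triple (T1 T2 T3 : finType) (F : T1 * T2 * T3 -> R) :
  \sum_k F k = \sum_a \sum_b \sum_c F (a, b, c).
Proof. by rewrite pair_bigA pair_bigA; apply: eq_bigr => -[[]]. Qed.

Definition success (Kz : bits l -> bits l -> bits l -> R) : R :=
  \sum_(w : sample l)
    sample_prob pz w * Kz w.1.1 (boxplus w.1.1 w.2) (boxplus w.1.2 w.2).

Lemma success_fibers Kz :
  success Kz = \sum_k zprob k.1.1 * Kz k.1.1 k.1.2 k.2 *+ fiber_card k.
Proof.
rewrite /success (partition_big (@observation l) xpredT) //=.
apply: eq_bigr => k _; rewrite -sumr_const.
by apply: eq_bigr => w /eqP <-.
Qed.

Lemma success_le Kz :
  (forall z y t, 0 <= Kz z y t) -> (forall z y, \sum_t Kz z y t = 1) ->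
  success Kz <= (3 / 4) ^+ l.
Proof.
move=> Kz_ge0 Kz_sum1; rewrite success_fibers -sum_zprob_3pow sum_triple.
apply: ler_sum => z _; apply: ler_sum => y _.
rewrite -[leRHS]mulr1 -(Kz_sum1 z y) mulr_sumr.
apply: ler_sum => t _; rewrite mulrnAl; apply: ler_wpMn2l (fiber_card_le _ _ _).
exact: mulr_ge0 (zprob_ge0 _) (Kz_ge0 _ _ _).
Qed.

Lemma success_identity : success (fun _ y t => (t == y)%:R) = (3 / 4) ^+ l.
Proof.
rewrite success_fibers -sum_zprob_3pow sum_triple.
apply: eq_bigr => z _; apply: eq_bigr => y _.
rewrite (bigD1 y) //= eqxx mulr1 fiber_card_diag big1 ?addr0 // => t /negbTE ->.
by rewrite mulr0 mul0rn.
Qed.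

Lemma sup_eq_max (E : set R) m : E m -> (forall r, E r -> r <= m) -> sup E = m.
Proof.
move=> Em m_ub; apply/le_anti/andP; split.
  by apply: ge_sup; [exists m | move=> r /m_ub].
by apply: ub_le_sup => //; exists m => r /m_ub.
Qed.

Lemma guess_chance_boxplus (I : finType) (f : bits l * bits l -> I) (g : I -> bits l) :
  (forall zy, g (f zy) = zy.2) ->
  guess_chance (sample_prob pz) (fun w : sample l => f (w.1.1, boxplus w.1.1 w.2))
    (fun w : sample l => boxplus w.1.2 w.2) = (3 / 4) ^+ l.
Proof.
move=> fgK; have sum_eq1 (y : bits l) : \sum_t ((t == y)%:R : R) = 1.
  by rewrite (bigD1 y) //= eqxx big1 ?addr0 // => t /negbTE ->.
apply: sup_eq_max.
  exists (fun i t => ((t == g i)%:R : R)); split.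
    by split=> [i t|i]; [rewrite ler0n | exact: sum_eq1].
  by rewrite -success_identity; apply: eq_bigr => w _; rewrite fgK.
move=> _ [K [[K_ge0 K_sum1] ->]].
exact: (@success_le (fun z y t => K (f (z, y)) t)).
Qed.

End Success.

Unset Implicit Arguments.

Lemma eq_negl_eqfun (R : realType) (f g : nat -> R) : f =1 g -> eq_negl f g.
Proof.
move=> f_g c; exists 1%N => n n_gt0.
by rewrite f_g subrr normr0 invr_gt0 exprn_gt0 // ltr0n.
Qed.

Theorem proposition5p7 (R : realType) (pz : forall l : nat, bits l -> R)
  (pz_ge0 : forall l (z : bits l), 0 <= pz l z)
  (pz_sum1 : forall l, \sum_(z : bits l) pz l z = 1) :
  let G1 := fun l : nat =>
    guess_chance (sample_prob (pz l))
      (fun w : sample l => boxplus w.1.1 w.2)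
      (fun w : sample l => boxplus w.1.2 w.2) in
  let G2 := fun l : nat =>
    guess_chance (sample_prob (pz l))
      (fun w : sample l => (w.1.1, boxplus w.1.1 w.2))
      (fun w : sample l => boxplus w.1.2 w.2) in
  eq_negl G1 G2 /\ eq_negl G2 (fun l => (3 / 4 : R) ^+ l).
Proof.
move=> G1 G2.
have G1E l : G1 l = (3 / 4) ^+ l.
  exact: (guess_chance_boxplus (pz_ge0 l) (pz_sum1 l) (f := snd) (g := id)).
have G2E l : G2 l = (3 / 4) ^+ l.
  exact: (guess_chance_boxplus (pz_ge0 l) (pz_sum1 l) (f := id) (g := snd)).
by split; apply: eq_negl_eqfun => l; rewrite ?G1E G2E.
Qed.
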